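(* Let $A,B\subset\mathbb{R}^2$ be Pareto sets, let $M=\{a+b:a\in A,b\in B\}$ be their Minkowski sum and $C$ their Pareto sum. Let $c,c'\in C$ with $c.x<c'.x$, and let $\varepsilon>0$. If there exists an element of $M$ that dominates the point $(c'.x-\varepsilon,\,c.y-\varepsilon)$, then the lexicographically smallest element $m\in M$ dominating $(c'.x-\varepsilon,\,c.y-\varepsilon)$ belongs to $C$.
   Context: For $p,p'\in\mathbb{R}^2$, $p$ dominates $p'$ if $p\neq p'$, $p.x\le p'.x$ and $p.y\le p'.y$. A Pareto set is a set $S\subset\mathbb{R}^2$ in which no point dominates another. The Pareto sum $C$ of Pareto sets $A,B$ is the set of points of $M$ not dominated by any point of $M$. *)

From Stdlib Require Import Reals.
Open Scope R_scope.

Definition pt := (R * R)%type.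
Definition px (p : pt) : R := fst p.
Definition py (p : pt) : R := snd p.

Definition dominates (p p' : pt) : Prop :=
  p <> p' /\ px p <= px p' /\ py p <= py p'.

Definition pareto_set (S : pt -> Prop) : Prop :=
  forall p q, S p -> S q -> ~ dominates p q.

Definition minkowski_sum (A B : pt -> Prop) : pt -> Prop :=
  fun m => exists a b, A a /\ B b /\ m = (px a + px b, py a + py b).

Definition pareto_sum (A B : pt -> Prop) : pt -> Prop :=
  fun c => minkowski_sum A B c /\
           forall m, minkowski_sum A B m -> ~ dominates m c.

Definition lex_le (p q : pt) : Prop :=
  px p < px q \/ (px p = px q /\ py p <= py q).

Definition lex_min_of (S P : pt -> Prop) (m : pt) : Prop :=
  S m /\ P m /\ forall m', S m' -> P m' -> lex_le m m'.

(* Domination is transitive, so every point dominating m also dominates the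
   target point; and a dominating point is lexicographically strictly smaller.
   Hence nothing in M dominates the lexicographic minimum m. *)
From Stdlib Require Import Reals Lra.
Open Scope R_scope.

Lemma pt_eq (p q : pt) : px p = px q -> py p = py q -> p = q.
Proof.
  destruct p, q; unfold px, py; simpl; intros -> ->; reflexivity.
Qed.

Lemma dominates_antisym (p q : pt) : dominates p q -> ~ dominates q p.
Proof.
  intros [Hne [Hx Hy]] [_ [Hx' Hy']].
  apply Hne, pt_eq; lra.
Qed.

Lemma dominates_trans (p q r : pt) :
  dominates p q -> dominates q r -> dominates p r.
Proof.
  intros Hpq Hqr.
  destruct Hpq as [Hne [Hx Hy]], Hqr as [Hne' [Hx' Hy']].
  repeat split; try lra.
  intros ->.
  apply (dominates_antisym q r); repeat split; assumption.
Qed.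

Lemma dominates_not_lex_le (p q : pt) : dominates p q -> ~ lex_le q p.
Proof.
  intros [Hne [Hx Hy]] [Hlt | [Heq Hle]]; [lra |].
  apply Hne, pt_eq; lra.
Qed.

Lemma lex_min_of_undominated (S P : pt -> Prop) (m : pt) :
  (forall p q, dominates p q -> P q -> P p) ->
  lex_min_of S P m -> forall p, S p -> ~ dominates p m.
Proof.
  intros HP [_ [HPm Hmin] ] p HSp Hpm.
  exact (dominates_not_lex_le p m Hpm (Hmin p HSp (HP p m Hpm HPm))).
Qed.

Theorem lemma1 (A B : pt -> Prop) (c c' : pt) (eps : R) (m : pt) :
  pareto_set A -> pareto_set B ->
  pareto_sum A B c -> pareto_sum A B c' ->
  px c < px c' -> 0 < eps ->
  (exists m0, minkowski_sum A B m0 /\ dominates m0 (px c' - eps, py c - eps)) ->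
  lex_min_of (minkowski_sum A B)
             (fun p => dominates p (px c' - eps, py c - eps)) m ->
  pareto_sum A B m.
Proof.
  intros _ _ _ _ _ _ _ Hmin.
  split.
  - exact (proj1 Hmin).
  - apply (lex_min_of_undominated _ _ _ (fun p q Hpq Hq => dominates_trans p q _ Hpq Hq) Hmin).
Qed.
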